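(* For the semi-discretization described below, choose $$f^\rho=\{\{\rho\}\}_{\log}\{\{v\}\},\qquad f^{\rho v}=\{\{v\}\}f^\rho+\{\{p\}\},\qquad f^{\rho e}=\frac{1}{\gamma-1}\frac{f^\rho}{\{\{\rho/p\}\}_{\log}}+\{\{v\}\}\{\{p\}\},\qquad v^{\mathrm{num}}=\{\{v\}\},$$ and any consistent $\rho^{\mathrm{num}}$. Then the semi-discretization is entropy-conservative for the entropy pair $U=-\rho s$, $F=-\rho sv$ with $s=\log(p/\rho^\gamma)$. If in addition $\rho^{\mathrm{num}}=\{\{\rho\}\}_{\log}$, the semi-discretization also conserves the total energy $\rho e+\tfrac12\rho v^2+\rho\phi$ (entropy-conservative for the pair $(\rho e+\tfrac12\rho v^2+\rho\phi,\ (\rho e+\tfrac12\rho v^2+\rho\phi+p)v)$).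
   Context: Let $\gamma>1$. States $(\rho,\rho v,\rho e)$ with $\rho>0$, $p=(\gamma-1)\rho e>0$, $v=\rho v/\rho$, and a time-independent gravity potential $\phi_i$ attached to each cell (treated as an extra state component). The scheme is $\partial_t\rho_i+\frac{f^\rho_{i+1/2}-f^\rho_{i-1/2}}{\Delta x}=0$, $\partial_t(\rho v)_i+\frac{f^{\rho v}_{i+1/2}-f^{\rho v}_{i-1/2}}{\Delta x}+\frac{\rho^{\mathrm{num}}_{i+1/2}[\![\phi]\!]_{i+1/2}+\rho^{\mathrm{num}}_{i-1/2}[\![\phi]\!]_{i-1/2}}{2\Delta x}=0$, $\partial_t(\rho e)_i+\frac{f^{\rho e}_{i+1/2}-f^{\rho e}_{i-1/2}}{\Delta x}-\frac{v^{\mathrm{num}}_{i+1/2}[\![p]\!]_{i+1/2}+v^{\mathrm{num}}_{i-1/2}[\![p]\!]_{i-1/2}}{2\Delta x}=0$, with subscript $i+1/2$ meaning evaluation at $(u_i,u_{i+1})$. Notation: $\{\{a\}\}=\tfrac12(a_-+a_+)$, $[\![a]\!]=a_+-a_-$, and for positive $a$ the logarithmic mean $\{\{a\}\}_{\log}=[\![a]\!]/[\![\log a]\!]$ if $a_-\ne a_+$ and $=a_-$ otherwise. Entropy-conservative for $(U,F)$ means: there exists a two-point $F^{\mathrm{num}}$ with $F^{\mathrm{num}}(u,u)=F(u)$ such that for all grid states and all $i$, $U'(u_i)\cdot\partial_tu_i=-\frac{1}{\Delta x}(F^{\mathrm{num}}(u_i,u_{i+1})-F^{\mathrm{num}}(u_{i-1},u_i))$,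 where $U'$ is the gradient with respect to $(\rho,\rho v,\rho e)$ (with $\phi$ held fixed). *)

From Stdlib Require Import Reals ZArith.
From Coquelicot Require Import Coquelicot.
Open Scope R_scope.

(* A cell state: (rho, rho v, rho e) plus the time-independent potential phi. *)
Record st := mkSt { rho : R; mom : R; ien : R; phi : R }.

Definition vel (u : st) : R := mom u / rho u.
Definition pres (g : R) (u : st) : R := (g - 1) * ien u.
Definition adm (g : R) (u : st) : Prop := 0 < rho u /\ 0 < pres g u.

Definition avg (a b : R) : R := (a + b) / 2.
Definition jump (a b : R) : R := b - a.
Definition logmean (a b : R) : R :=
  if Req_EM_T a b then a else (b - a) / (ln b - ln a).

(* Generic semi-discretization: right-hand side (d_t rho, d_t rho v, d_t rho e)
   of cell i, given u_{i-1}, u_i, u_{i+1}, numerical fluxes and rho^num, v^num. *)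
Definition rhs (g dx : R)
  (frho fmom fene rhonum vnum : st -> st -> R) (um ui up : st) : R * R * R :=
  ( - (frho ui up - frho um ui) / dx,
    - (fmom ui up - fmom um ui) / dx
      - (rhonum ui up * jump (phi ui) (phi up) + rhonum um ui * jump (phi um) (phi ui)) / (2 * dx),
    - (fene ui up - fene um ui) / dx
      + (vnum ui up * jump (pres g ui) (pres g up) + vnum um ui * jump (pres g um) (pres g ui)) / (2 * dx)).

Definition gradU (U : R -> R -> R -> R -> R) (u : st) : R * R * R :=
  ( Derive (fun x => U x (mom u) (ien u) (phi u)) (rho u),
    Derive (fun x => U (rho u) x (ien u) (phi u)) (mom u),
    Derive (fun x => U (rho u) (mom u) x (phi u)) (ien u)).

Definition dot3 (a b : R * R * R) : R :=
  let '(a1, a2, a3) := a in let '(b1, b2, b3) := b in a1 * b1 + a2 * b2 + a3 * b3.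

Definition entropy_conservative (g dx : R) (U : R -> R -> R -> R -> R) (F : st -> R)
  (frho fmom fene rhonum vnum : st -> st -> R) : Prop :=
  exists Fnum : st -> st -> R,
    (forall u, adm g u -> Fnum u u = F u) /\
    forall u : Z -> st, (forall j, adm g (u j)) -> forall i : Z,
      dot3 (gradU U (u i))
           (rhs g dx frho fmom fene rhonum vnum (u (i - 1)%Z) (u i) (u (i + 1)%Z))
      = - (Fnum (u i) (u (i + 1)%Z) - Fnum (u (i - 1)%Z) (u i)) / dx.

Definition frhoEC (g : R) (uL uR : st) : R :=
  logmean (rho uL) (rho uR) * avg (vel uL) (vel uR).
Definition fmomEC (g : R) (uL uR : st) : R :=
  avg (vel uL) (vel uR) * frhoEC g uL uR + avg (pres g uL) (pres g uR).
Definition feneEC (g : R) (uL uR : st) : R :=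
  1 / (g - 1) * frhoEC g uL uR / logmean (rho uL / pres g uL) (rho uR / pres g uR)
  + avg (vel uL) (vel uR) * avg (pres g uL) (pres g uR).
Definition vnumEC (uL uR : st) : R := avg (vel uL) (vel uR).

(* Entropy pair: U = - rho s, F = - rho s v, s = log (p / rho^gamma), p = (gamma-1) rho e *)
Definition entU (g : R) (r m E ph : R) : R := - r * ln ((g - 1) * E / Rpower r g).
Definition entF (g : R) (u : st) : R :=
  entU g (rho u) (mom u) (ien u) (phi u) * vel u.

Definition totU (r m E ph : R) : R := E + / 2 * r * (m / r) ^ 2 + r * ph.
Definition totF (g : R) (u : st) : R :=
  (totU (rho u) (mom u) (ien u) (phi u) + pres g u) * vel u.

Definition consistent_rhonum (g : R) (rn : st -> st -> R) : Prop :=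
  forall u, adm g u -> rn u u = rho u.

(** Split the scheme interface by interface: at the face between [L] and [Q],
    cell [L] loses [flux_out L Q] and cell [Q] gains [flux_in L Q]; the two
    differ only by the halves of the non-conservative source terms.
    Contracting with the entropy variables [w = U'], the scheme conserves
    [(U, F)] as soon as [w Q . flux_in L Q - psi Q = w L . flux_out L Q - psi L]
    for some cell potential [psi]; this common value is the numerical flux.

    For [U = - rho s] (with [psi = 0]) the balance follows from
    jump (ln a) = jump a / {{a}}_log, applied to [rho] and to [rho / p], and the
    discrete product rule jump rho = jump (rho / p) {{p}} + {{rho / p}} jump p;
    the momentum component of [w] vanishes.  For the
    total energy (with [psi = v p]) the gravity source cancels only when
    [rho^num {{v}} = f^rho], i.e. [rho^num = {{rho}}_log]. *)

From Stdlib Require Import Reals ZArith Lra.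
From Coquelicot Require Import Coquelicot.
Open Scope R_scope.

Section FaceBalance.

Variables (g dx : R) (frho fmom fene rhonum vnum : st -> st -> R).

Definition flux_out (L Q : st) : R * R * R :=
  ( frho L Q,
    fmom L Q + rhonum L Q * jump (phi L) (phi Q) / 2,
    fene L Q - vnum L Q * jump (pres g L) (pres g Q) / 2 ).

Definition flux_in (L Q : st) : R * R * R :=
  ( frho L Q,
    fmom L Q - rhonum L Q * jump (phi L) (phi Q) / 2,
    fene L Q + vnum L Q * jump (pres g L) (pres g Q) / 2 ).

Lemma dot3_rhs_face_fluxes (w : R * R * R) (um ui up : st) : dx <> 0 ->
  dot3 w (rhs g dx frho fmom fene rhonum vnum um ui up)
  = - (dot3 w (flux_out ui up) - dot3 w (flux_in um ui)) / dx.
Proof.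
destruct w as [[w1 w2] w3]; intros hdx.
unfold rhs, dot3, flux_out, flux_in; field; exact hdx.
Qed.

Lemma entropy_conservative_of_face_balance (U : R -> R -> R -> R -> R)
    (F : st -> R) (w : st -> R * R * R) (psi : st -> R) :
  dx <> 0 ->
  (forall u, adm g u -> gradU U u = w u) ->
  (forall u, adm g u -> dot3 (w u) (flux_out u u) - psi u = F u) ->
  (forall L Q, adm g L -> adm g Q ->
     dot3 (w Q) (flux_in L Q) - psi Q = dot3 (w L) (flux_out L Q) - psi L) ->
  entropy_conservative g dx U F frho fmom fene rhonum vnum.
Proof.
intros hdx hgrad hcons hbal.
exists (fun L Q => dot3 (w L) (flux_out L Q) - psi L); split; [exact hcons|].
intros u hu i.
rewrite hgrad, dot3_rhs_face_fluxes by auto.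
assert (hin := hbal (u (i - 1)%Z) (u i) (hu _) (hu _)).
field_simplify_eq; [lra | exact hdx].
Qed.

End FaceBalance.

Lemma logmean_id (a : R) : logmean a a = a.
Proof. unfold logmean; destruct (Req_EM_T a a); congruence. Qed.

Lemma logmean_gt0 (a b : R) : 0 < a -> 0 < b -> 0 < logmean a b.
Proof.
intros ha hb; unfold logmean; destruct (Req_EM_T a b) as [_|ne]; [exact ha|].
destruct (Rtotal_order a b) as [hlt|[heq|hgt]]; [| contradiction |].
- assert (ln a < ln b) by (apply ln_increasing; auto).
  apply Rdiv_lt_0_compat; lra.
- assert (ln b < ln a) by (apply ln_increasing; auto).
  replace ((b - a) / (ln b - ln a)) with ((a - b) / (ln a - ln b)) by (field; lra).
  apply Rdiv_lt_0_compat; lra.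
Qed.

Lemma jump_ln_logmean (a b : R) : 0 < a -> 0 < b ->
  ln b - ln a = (b - a) / logmean a b.
Proof.
intros ha hb; unfold logmean; destruct (Req_EM_T a b) as [<-|ne].
- unfold Rdiv; ring.
- assert (ln b - ln a <> 0) by (intro h; apply ne, ln_inv; auto; lra).
  field; split; [auto | lra].
Qed.

Lemma ien_gt0 (g : R) (u : st) : 1 < g -> adm g u -> 0 < ien u.
Proof. unfold adm, pres; intros hg [_ hp]; nra. Qed.

Definition spec_entropy (g : R) (u : st) : R := ln (pres g u) - g * ln (rho u).

Definition entropy_vars (g : R) (u : st) : R * R * R :=
  (g - spec_entropy g u, 0, - (g - 1) * (rho u / pres g u)).

Lemma ln_entU_arg (g : R) (u : st) : adm g u ->
  ln ((g - 1) * ien u / Rpower (rho u) g) = spec_entropy g u.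
Proof.
intros [hr hp]; unfold spec_entropy, pres, Rpower in *.
rewrite ln_div, ln_exp by (auto; apply exp_pos); ring.
Qed.

Lemma gradU_entU (g : R) (u : st) : 1 < g -> adm g u ->
  gradU (entU g) u = entropy_vars g u.
Proof.
intros hg hu; pose proof (ien_gt0 g u hg hu) as hE; destruct hu as [hr hp].
pose proof (exp_pos (g * ln (rho u))) as hpow.
unfold gradU, entU, entropy_vars, Rpower; f_equal; [f_equal|].
- apply is_derive_unique.
  rewrite <- (ln_entU_arg g u) by (split; auto); unfold Rpower.
  auto_derive.
  + repeat split; try lra; apply Rdiv_lt_0_compat; nra.
  + unfold Rdiv; field; lra.
- apply Derive_const.
- apply is_derive_unique; unfold pres in *.
  auto_derive.
  + repeat split; try lra; apply Rdiv_lt_0_compat; nra.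
  + field; lra.
Qed.

Lemma entropy_flux_consistent (g : R) (rhonum : st -> st -> R) (u : st) :
  1 < g -> adm g u ->
  dot3 (entropy_vars g u)
       (flux_out g (frhoEC g) (fmomEC g) (feneEC g) rhonum vnumEC u u)
  = entF g u.
Proof.
intros hg hu; pose proof (ien_gt0 g u hg hu) as hE.
unfold entF, entU; rewrite ln_entU_arg by exact hu.
unfold dot3, entropy_vars, flux_out, feneEC, frhoEC, vnumEC, jump, avg, vel, pres in *.
rewrite !logmean_id; destruct hu; field; lra.
Qed.

Lemma entropy_face_balance (g : R) (rhonum : st -> st -> R) (L Q : st) :
  1 < g -> adm g L -> adm g Q ->
  dot3 (entropy_vars g Q)
       (flux_in g (frhoEC g) (fmomEC g) (feneEC g) rhonum vnumEC L Q)
  = dot3 (entropy_vars g L)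
       (flux_out g (frhoEC g) (fmomEC g) (feneEC g) rhonum vnumEC L Q).
Proof.
intros hg [hrL hpL] [hrQ hpQ].
assert (hbL : 0 < rho L / pres g L) by (apply Rdiv_lt_0_compat; auto).
assert (hbQ : 0 < rho Q / pres g Q) by (apply Rdiv_lt_0_compat; auto).
pose proof (logmean_gt0 _ _ hrL hrQ) as lmr; pose proof (jump_ln_logmean _ _ hrL hrQ) as jr.
pose proof (logmean_gt0 _ _ hbL hbQ) as lmb; pose proof (jump_ln_logmean _ _ hbL hbQ) as jb.
rewrite !ln_div in jb by auto.
unfold dot3, entropy_vars, spec_entropy, flux_in, flux_out,
  feneEC, frhoEC, vnumEC, jump, avg.
set (mr := logmean (rho L) (rho Q)) in *.
set (mb := logmean (rho L / pres g L) (rho Q / pres g Q)) in *.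
replace (ln (pres g Q))
  with (ln (pres g L) + (ln (rho Q) - ln (rho L)) - (rho Q / pres g Q - rho L / pres g L) / mb)
  by lra.
replace (ln (rho Q)) with (ln (rho L) + (rho Q - rho L) / mr) by lra.
field; repeat split; lra.
Qed.

Definition energy_vars (u : st) : R * R * R := (phi u - / 2 * vel u ^ 2, vel u, 1).

Lemma gradU_totU (u : st) : 0 < rho u -> gradU totU u = energy_vars u.
Proof.
intros hr; unfold gradU, totU, energy_vars, vel; f_equal; [f_equal|];
  apply is_derive_unique; auto_derive; try lra; field; lra.
Qed.

Lemma energy_flux_consistent (g : R) (u : st) : 1 < g -> adm g u ->
  dot3 (energy_vars u)
       (flux_out g (frhoEC g) (fmomEC g) (feneEC g)
          (fun L Q => logmean (rho L) (rho Q)) vnumEC u u) - vel u * pres g u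
  = totF g u.
Proof.
intros hg hu; pose proof (ien_gt0 g u hg hu) as hE; destruct hu as [hr hp].
unfold dot3, energy_vars, totF, totU, flux_out, fmomEC, feneEC, frhoEC, vnumEC,
  jump, avg, vel, pres in *.
rewrite !logmean_id; field; lra.
Qed.

Lemma energy_face_balance (g : R) (L Q : st) :
  dot3 (energy_vars Q)
       (flux_in g (frhoEC g) (fmomEC g) (feneEC g)
          (fun L Q => logmean (rho L) (rho Q)) vnumEC L Q) - vel Q * pres g Q
  = dot3 (energy_vars L)
       (flux_out g (frhoEC g) (fmomEC g) (feneEC g)
          (fun L Q => logmean (rho L) (rho Q)) vnumEC L Q) - vel L * pres g L.
Proof.
unfold dot3, energy_vars, flux_in, flux_out, fmomEC, frhoEC, vnumEC, jump, avg.
field.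
Qed.

Theorem mainTheorem12 (g dx : R) (hg : 1 < g) (hdx : 0 < dx) :
  (forall rhonum : st -> st -> R, consistent_rhonum g rhonum ->
     entropy_conservative g dx (entU g) (entF g)
       (frhoEC g) (fmomEC g) (feneEC g) rhonum vnumEC) /\
  entropy_conservative g dx totU (totF g)
    (frhoEC g) (fmomEC g) (feneEC g)
    (fun uL uR => logmean (rho uL) (rho uR)) vnumEC.
Proof.
assert (hdx0 : dx <> 0) by lra.
split.
- intros rhonum _.
  apply (entropy_conservative_of_face_balance g dx _ _ _ _ _ _ _
           (entropy_vars g) (fun _ => 0) hdx0).
  + intros u; exact (gradU_entU g u hg).
  + intros u hu; rewrite Rminus_0_r; exact (entropy_flux_consistent g rhonum u hg hu).
  + intros L Q hL hQ; rewrite !Rminus_0_r; exact (entropy_face_balance g rhonum L Q hg hL hQ).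
- apply (entropy_conservative_of_face_balance g dx _ _ _ _ _ _ _
           energy_vars (fun u => vel u * pres g u) hdx0).
  + intros u hu; exact (gradU_totU u (proj1 hu)).
  + intros u; exact (energy_flux_consistent g u hg).
  + intros L Q _ _; exact (energy_face_balance g L Q).
Qed.
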